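(* Fix any finitely supported real random variable $\mathbf{X}$ with $\mathbf{E}[\mathbf{X}]=0$ and $\mathrm{Var}[\mathbf{X}]=1$, any degree bound $d$, any sparsity parameter $s\in\mathbb{N}$, and a gap value $T\in\mathbb{N}$. Let $\boldsymbol{\eta}_0$ be the noise distribution that always outputs $0$. If $T\le \mathrm{Max\text{-}Sparsity\text{-}Gap}_{\mathbf{X},d}(s)-1$, then there exists a real $\varepsilon>0$, independent of $n$, such that any algorithm for the $(\mathbf{X},d,\boldsymbol{\eta}_0,s,T,\varepsilon)$ polynomial sparsity testing problem must use $\Omega_{\mathbf{X},d,s}(\log n)$ samples.
   Context: A multilinear polynomial of degree at most $d$ over $\mathbb{R}^n$ is $p(x)=\sum_{S\subseteq[n],|S|\le d}\widehat{p}(S)\prod_{i\in S}x_i$; $\mathrm{sparsity}(p)$ is the number of nonzero coefficients, and $\|p\|_{\mathrm{coeff}}=(\sum_S\widehat{p}(S)^2)^{1/2}$. For nonzero $p$, $p$ is $\varepsilon$-far from $T$-sparse if $\min_q\|p-q\|_{\mathrm{coeff}}/\|p\|_{\mathrm{coeff}}\ge\varepsilon$ over all $T$-sparse degree-$d$ multilinear $q$. $\mathrm{Max\text{-}Sparsity\text{-}Gap}_{\mathbf{X},d}(s)$ is the largest natural number $t$ such that there exist (for some $n$) multilinear polynomials $p,q$ of degree at most $d$ with $\mathrm{sparsity}(p)=s$, $\mathrm{sparsity}(q)=t$, and $p(\mathbf{X}^{\otimes n})$, $q(\mathbf{X}^{\otimes n})$ identically distributed, while no such pair exists with $\mathrm{sparsity}(q)>t$.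 The $(\mathbf{X},d,\boldsymbol{\eta},s,T,\varepsilon)$ polynomial sparsity testing problem (with a norm bound parameter $K\ge1$): an algorithm receives i.i.d. samples $(\mathbf{x},p(\mathbf{x})+\boldsymbol{\eta})$, $\mathbf{x}\sim\mathbf{X}^{\otimes n}$, $\boldsymbol{\eta}$ independent, where $p$ is an unknown degree-$\le d$ multilinear polynomial over $\mathbb{R}^n$ with $1/K\le\|p\|_{\mathrm{coeff}}\le K$; it must output ''$s$-sparse'' with probability $\ge 9/10$ if $\mathrm{sparsity}(p)\le s$, and ''$\varepsilon$-far from $T$-sparse'' with probability $\ge 9/10$ if $p$ is $\varepsilon$-far from $T$-sparse. The algorithm may depend on $\mathbf{X},\boldsymbol{\eta},d,s,T,K,\varepsilon$. *)

From HB Require Import structures.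
From mathcomp Require Import all_boot all_order all_algebra.
From mathcomp Require Import reals exp.
Set Implicit Arguments. Unset Strict Implicit. Unset Printing Implicit Defensive.
Import Order.TTheory GRing.Theory Num.Theory.
Local Open Scope ring_scope.

Section Defs.
Variable R : realType.

(** Multilinear polynomials over R^n: one coefficient per subset S of [n]. *)
Definition mlpoly (n : nat) := {ffun {set 'I_n} -> R}.

Definition deg_le (n d : nat) (p : mlpoly n) : Prop :=
  forall S : {set 'I_n}, (d < #|S|)%N -> p S = 0.

Definition sparsity (n : nat) (p : mlpoly n) : nat :=
  #|[set S : {set 'I_n} | p S != 0]|.

Definition meval (n : nat) (p : mlpoly n) (x : 'I_n -> R) : R :=
  \sum_(S : {set 'I_n}) p S * \prod_(i in S) x i.

Definition coeff_norm (n : nat) (p : mlpoly n) : R :=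
  Num.sqrt (\sum_(S : {set 'I_n}) p S ^+ 2).

Definition far_from_sparse (n d T : nat) (eps : R) (p : mlpoly n) : Prop :=
  p != 0 /\
  forall q : mlpoly n, deg_le d q -> (sparsity q <= T)%N ->
    eps <= coeff_norm [ffun S => p S - q S] / coeff_norm p.

(** A finitely supported random variable X is given by its (duplicate-free)
    support [supp] and its probability mass function [w]. A point of
    X^{(x) n} is encoded by the indices in [supp] of its coordinates. *)
Variables (supp : seq R) (w : R -> R).

Definition pt (n : nat) (x : {ffun 'I_n -> 'I_(size supp)}) : 'I_n -> R :=
  fun i => nth 0 supp (x i).

Definition pt_weight (n : nat) (x : {ffun 'I_n -> 'I_(size supp)}) : R :=
  \prod_(i < n) w (nth 0 supp (x i)).

Definition prob_val (n : nat) (p : mlpoly n) (y : R) : R :=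
  \sum_(x : {ffun 'I_n -> 'I_(size supp)} | meval p (pt x) == y) pt_weight x.

Definition ident_distr (n : nat) (p q : mlpoly n) : Prop :=
  forall y : R, prob_val p y = prob_val q y.

Definition is_max_sparsity_gap (d s t : nat) : Prop :=
  (exists (n : nat) (p q : mlpoly n),
      deg_le d p /\ deg_le d q /\ sparsity p = s /\ sparsity q = t /\
      ident_distr p q) /\
  (forall (n : nat) (p q : mlpoly n),
      deg_le d p -> deg_le d q -> sparsity p = s -> ident_distr p q ->
      (sparsity q <= t)%N).

(** A (randomized) tester using m samples on n variables is modelled by
    the probability [A smp] in [0,1] that it outputs "s-sparse" on the
    sample sequence [smp] (list of m labelled points (x, y)). *)
Definition tester (n m : nat) := ('I_m -> ('I_n -> R) * R) -> R.

(** Probability that A outputs "s-sparse" on i.i.d. samples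
    (x, p(x) + eta) with x ~ X^{(x)n} and eta = eta_0 = 0. *)
Definition accept_prob (n m : nat) (A : tester n m) (p : mlpoly n) : R :=
  \sum_(xs : {ffun 'I_m -> {ffun 'I_n -> 'I_(size supp)}})
     (\prod_(j < m) pt_weight (xs j)) *
     A (fun j => (pt (xs j), meval p (pt (xs j)) + 0)).

Definition solves_testing (d s T : nat) (K eps : R) (n m : nat)
    (A : tester n m) : Prop :=
  (forall smp, 0 <= A smp <= 1) /\
  forall p : mlpoly n, deg_le d p ->
    K^-1 <= coeff_norm p <= K ->
    ((sparsity p <= s)%N -> 9 / 10 <= accept_prob A p) /\
    (far_from_sparse d T eps p -> 1 - accept_prob A p >= 9 / 10).

End Defs.

(* The witness pair P, Q of the sparsity gap (sparsities s and t > T, identically distributed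
   on X^{(x) n0}) has equal coefficient norms, since E[p(X)^2] = ||p||^2 for mean-0 variance-1
   coordinates; rescale both to norm 1.  Every copy of P on n0 of the n variables is s-sparse and
   every copy of Q is eps-far from T-sparse, eps being the least relative nonzero coefficient of Q.
   Place B = n / (n0 + 1) copies on disjoint blocks: on each block the tester accepts the P-copy
   with probability >= 9/10 and the Q-copy with probability <= 1/10.  Write the summed gap as
   E[sum_y A(x, y) D_y(x)], where D_y counts the blocks whose P-labels equal y minus those whose
   Q-labels do.  Since A D <= D^2/4 + 1, and independence of the blocks makes E[D_y^2] additive
   (each block contributing at most 2 in total over y), 8B/10 <= B/2 + #labels, and there are at
   most 2 (k^n0)^m labels.  Hence n <= (k^n0)^(2m), i.e. m >= ln n / (2 k^n0). *)

From mathcomp Require Import all_boot all_order all_algebra.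
From mathcomp Require Import reals exp boolp.
From mathcomp Require Import ring lra zify.
Import Order.TTheory GRing.Theory Num.Theory.
Set Implicit Arguments. Unset Strict Implicit. Unset Printing Implicit Defensive.
Local Open Scope ring_scope.

Section Laws.
Variable R : comRingType.

Lemma sum_seq_indicator (U : eqType) (Y : seq U) (F : U -> R) (v : U) :
  uniq Y -> v \in Y -> \sum_(y <- Y) F y * (y == v)%:R = F v.
Proof.
move=> uY vY; rewrite (big_rem v) //= eqxx mulr1 big1_seq ?addr0 // => y /andP[_ yY].
suff /negbTE-> : y != v by rewrite mulr0.
by move: yY; apply: contraTneq => ->; rewrite mem_rem_uniqF.
Qed.

Lemma sum_indicator (T : finType) (F : T -> R) (v : T) : \sum_t F t * (t == v)%:R = F v.
Proof. exact: sum_seq_indicator (index_enum_uniq T) (mem_index_enum v). Qed.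

Definition has_law (T : finType) (U : eqType) (mu : T -> R) (f : T -> U) (nu : U -> R) :=
  forall u, \sum_t mu t * (f t == u)%:R = nu u.

Lemma has_law_sum_seq (T : finType) (U : eqType) (mu : T -> R) f nu (Y : seq U) F :
  has_law mu f nu -> uniq Y -> (forall t, f t \in Y) ->
  \sum_t mu t * F (f t) = \sum_(u <- Y) nu u * F u.
Proof.
move=> law uY fY; transitivity (\sum_t \sum_(u <- Y) mu t * (F u * (u == f t)%:R)).
  by apply: eq_bigr => t _; rewrite -mulr_sumr sum_seq_indicator.
rewrite exchange_big /=; apply: eq_bigr => u _.
by rewrite -law mulr_suml; apply: eq_bigr => t _; rewrite eq_sym mulrA mulrAC.
Qed.

Lemma has_law_sum (T U : finType) (mu : T -> R) f nu F :
  has_law mu f nu -> \sum_t mu t * F (f t) = \sum_(u : U) nu u * F u.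
Proof. by move=> law; apply: has_law_sum_seq; rewrite ?index_enum_uniq ?mem_index_enum. Qed.

Lemma has_law_pair_sum (T U V : finType) (mu : T -> R) (f : T -> U) (g : T -> V) nu1 nu2 F G :
  has_law mu (fun t => (f t, g t)) (fun p => nu1 p.1 * nu2 p.2) ->
  \sum_t mu t * (F (f t) * G (g t)) = (\sum_u nu1 u * F u) * (\sum_v nu2 v * G v).
Proof.
move=> law; rewrite (has_law_sum (fun p => F p.1 * G p.2) law) big_distrlr pair_big /=.
by apply: eq_bigr => -[u v] _; rewrite mulrACA.
Qed.

Lemma pair_eq_indicator (U V : eqType) (a u : U) (b v : V) :
  (((a, b) == (u, v))%:R : R) = (a == u)%:R * (b == v)%:R.
Proof. by rewrite xpair_eqE -natrM mulnb. Qed.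

Lemma ffun_eq_indicator (I : finType) (T : eqType) (h : I -> T) (u : {ffun I -> T}) :
  (([ffun i => h i] == u)%:R : R) = \prod_i (h i == u i)%:R.
Proof.
case: eqP => [<- | ne]; first by rewrite big1 // => i _; rewrite ffunE eqxx.
have [i hi | all_eq] := pickP (fun i => h i != u i).
  by rewrite (bigD1 i) //= (negbTE hi) mul0r.
by case: ne; apply/ffunP => i; rewrite ffunE; apply/eqP/negbFE/all_eq.
Qed.

Definition prodw (I : finType) (T : Type) (mu : T -> R) (x : {ffun I -> T}) : R := \prod_i mu (x i).

Lemma sum_prodw_prod (I T : finType) (mu : T -> R) (g : I -> T -> R) :
  \sum_(x : {ffun I -> T}) prodw mu x * \prod_i g i (x i) = \prod_i \sum_t mu t * g i t.
Proof. by rewrite bigA_distr_bigA; apply: eq_bigr => x _; rewrite -big_split. Qed.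

Lemma sum_prodw (I T : finType) (mu : T -> R) :
  \sum_t mu t = 1 -> \sum_(x : {ffun I -> T}) prodw mu x = 1.
Proof.
move=> mu1; transitivity (\prod_(i : I) \sum_t mu t * 1).
  by rewrite -sum_prodw_prod; apply: eq_bigr => x _; rewrite big1_eq mulr1.
by rewrite big1 // => i _; rewrite -[RHS]mu1; apply: eq_bigr => t _; rewrite mulr1.
Qed.

Lemma has_law_map (I T : finType) (U : eqType) (mu : T -> R) (f : T -> U) nu :
  has_law mu f nu -> has_law (@prodw I T mu) (fun x => [ffun i => f (x i)]) (prodw nu).
Proof.
move=> law u; under eq_bigr do rewrite ffun_eq_indicator.
by rewrite (sum_prodw_prod mu (fun i c => (f c == u i)%:R)); apply: eq_bigr.
Qed.

Lemma has_law_map2 (I T : finType) (U V : eqType) (mu : T -> R) (f : T -> U) (g : T -> V) nu1 nu2 :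
  has_law mu (fun t => (f t, g t)) (fun p => nu1 p.1 * nu2 p.2) ->
  has_law (@prodw I T mu) (fun x => ([ffun i => f (x i)], [ffun i => g (x i)]))
    (fun p => prodw nu1 p.1 * prodw nu2 p.2).
Proof.
move=> law [u v]; under eq_bigr do rewrite pair_eq_indicator !ffun_eq_indicator -big_split.
rewrite (sum_prodw_prod mu (fun i c => (f c == u i)%:R * (g c == v i)%:R)) -big_split.
apply: eq_bigr => i _ /=.
by rewrite -(law (u i, v i)); apply: eq_bigr => t _; rewrite pair_eq_indicator.
Qed.

Lemma prod_reindex_pick (I0 I : finType) (s : I0 -> I) (phi : I -> I0 -> R) : injective s ->
  \prod_i (if [pick i0 | s i0 == i] is Some i0 then phi i i0 else 1) = \prod_i0 phi (s i0) i0.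
Proof.
move=> inj_s; rewrite (bigID (mem [set s i0 | i0 in setT])) /=.
rewrite [X in _ * X]big1 ?mulr1 => [|i]; last first.
  by case: pickP => // i0 /eqP <-; rewrite imset_f ?in_setT.
rewrite big_imset /=; last by move=> i0 j0 _ _; apply: inj_s.
apply: eq_big => [i0 | i0 _]; first by rewrite in_setT.
by case: pickP => [j0 /eqP /inj_s -> // | /(_ i0)]; rewrite eqxx.
Qed.

Lemma sum_prodw_restr (I0 I T : finType) (mu : T -> R) (s : I0 -> I) (g : I0 -> T -> R) :
  \sum_t mu t = 1 -> injective s ->
  \sum_(x : {ffun I -> T}) prodw mu x * \prod_i0 g i0 (x (s i0)) = \prod_i0 \sum_t mu t * g i0 t.
Proof.
move=> mu1 inj_s.
pose g' i t := if [pick i0 | s i0 == i] is Some i0 then g i0 t else 1.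
transitivity (\prod_i \sum_t mu t * g' i t); last first.
  rewrite -(prod_reindex_pick (fun _ i0 => \sum_t mu t * g i0 t) inj_s).
  apply: eq_bigr => i _; rewrite /g'; case: pickP => // _.
  by rewrite -[RHS]mu1; apply: eq_bigr => t _; rewrite mulr1.
rewrite -sum_prodw_prod; apply: eq_bigr => x _; congr (_ * _).
rewrite -(prod_reindex_pick (fun i i0 => g i0 (x i)) inj_s).
by apply: eq_bigr => i _; rewrite /g'; case: pickP.
Qed.

Definition restr (I0 I T : finType) (s : I0 -> I) (x : {ffun I -> T}) : {ffun I0 -> T} :=
  [ffun i0 => x (s i0)].

Lemma has_law_restr2 (I1 I2 I T : finType) (mu : T -> R) (s : I1 -> I) (t : I2 -> I) :
  \sum_c mu c = 1 -> injective s -> injective t -> (forall i1 i2, s i1 != t i2) ->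
  has_law (prodw mu) (fun x => (restr s x, restr t x)) (fun p => prodw mu p.1 * prodw mu p.2).
Proof.
move=> mu1 inj_s inj_t st_neq [u v].
pose st k := match k with inl i1 => s i1 | inr i2 => t i2 end.
pose uv k := match k with inl i1 => u i1 | inr i2 => v i2 end.
have inj_st : injective st.
  case=> [i1|i2] [j1|j2] /= e; rewrite ?(inj_s _ _ e) ?(inj_t _ _ e) //.
    by case/eqP: (st_neq i1 j2).
  by case/eqP: (st_neq j1 i2).
transitivity (\sum_x prodw mu x * \prod_k (x (st k) == uv k)%:R).
  apply: eq_bigr => x _; rewrite pair_eq_indicator !ffun_eq_indicator.
  by rewrite (big_sumType _ _ (fun k => (x (st k) == uv k)%:R)).
rewrite (sum_prodw_restr (fun k c => (c == uv k)%:R)) // big_sumType.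
by congr (_ * _); apply: eq_bigr => i _; rewrite sum_indicator.
Qed.

Lemma sum_sqr_orthogonal (Omega I : finType) (W : Omega -> R) (X : I -> Omega -> R) :
  (forall i j, i != j -> \sum_o W o * (X i o * X j o) = 0) ->
  \sum_o W o * (\sum_i X i o) ^+ 2 = \sum_i \sum_o W o * X i o ^+ 2.
Proof.
move=> orth; transitivity (\sum_i \sum_j \sum_o W o * (X i o * X j o)).
  under eq_bigr do rewrite expr2 big_distrlr mulr_sumr /=.
  rewrite exchange_big /=; apply: eq_bigr => i _.
  by under eq_bigr do rewrite mulr_sumr; rewrite exchange_big.
apply: eq_bigr => i _; rewrite (bigD1 i) //= [X in _ + X]big1 ?addr0 => [|j ji].
  by under eq_bigr do rewrite -expr2.
by apply: orth; rewrite eq_sym.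
Qed.

Lemma sum_prodw_monomials (I T : finType) (mu a : T -> R) (S S' : {set I}) :
  \sum_t mu t = 1 -> \sum_t mu t * a t = 0 -> \sum_t mu t * a t ^+ 2 = 1 ->
  \sum_(x : {ffun I -> T}) prodw mu x * (\prod_(i in S) a (x i) * \prod_(i in S') a (x i))
    = (S == S')%:R.
Proof.
move=> mu1 mean0 var1.
pose g i t := (if i \in S then a t else 1) * (if i \in S' then a t else 1).
transitivity (\prod_i \sum_t mu t * g i t).
  by rewrite -(sum_prodw_prod mu g); apply: eq_bigr => x _; rewrite big_split -!big_mkcond.
rewrite /g; have [<- | neq] := eqVneq S S'.
  apply: big1 => i _; case: (i \in S); last first.
    by rewrite -[RHS]mu1; apply: eq_bigr => t _; rewrite !mulr1.
  by rewrite -[RHS]var1; apply: eq_bigr => t _; rewrite expr2.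
have [i /negbTE Si | eq_in] := pickP (fun i => (i \in S) != (i \in S')); last first.
  by case/eqP: neq; apply/setP => i; apply/eqP/negbFE/eq_in.
rewrite (bigD1 i) //= [X in X * _](_ : _ = 0) ?mul0r //.
rewrite -[RHS]mean0; apply: eq_bigr => t _.
by case: (i \in S) Si; case: (i \in S') => //= _; rewrite ?mulr1 ?mul1r.
Qed.

End Laws.

Lemma sum_sqr_indicator_sub_le (R : realFieldType) (L : eqType) (Y : seq L) (u v : L) :
  uniq Y -> u \in Y -> v \in Y ->
  \sum_(y <- Y) ((y == u)%:R - (y == v)%:R) ^+ 2 <= 2 :> R.
Proof.
move=> uY uinY vinY.
apply: (le_trans (y := \sum_(y <- Y) (1 * (y == u)%:R + 1 * (y == v)%:R))).
  by apply: ler_sum => y _; case: (y == u); case: (y == v); rewrite /= ?mulr1n ?mulr0n; lra.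
by rewrite big_split /= !(sum_seq_indicator (fun => 1)).
Qed.

Section Distinguisher.
Variables (R : realFieldType) (Omega V : finType) (L : eqType) (B : nat).
Variables (W : Omega -> R) (nu : V -> R) (lam : L -> R).
Variables (Z : 'I_B -> Omega -> V) (f g : V -> L) (a : Omega -> L -> R).
Hypotheses (W_ge0 : forall o, 0 <= W o) (W_sum1 : \sum_o W o = 1).
Hypothesis Z_indep :
  forall b b', b != b' -> has_law W (fun o => (Z b o, Z b' o)) (fun p => nu p.1 * nu p.2).
Hypotheses (f_law : has_law nu f lam) (g_law : has_law nu g lam).
Hypothesis a01 : forall o y, 0 <= a o y <= 1.

Lemma indep_blocks_gap_le :
  \sum_b (\sum_o W o * a o (f (Z b o)) - \sum_o W o * a o (g (Z b o)))
    <= B%:R / 2 + 2 * #|V|%:R.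
Proof.
pose Y := undup (map f (enum V) ++ map g (enum V)).
have uY : uniq Y := undup_uniq _.
have fY v : f v \in Y by rewrite mem_undup mem_cat map_f ?mem_enum.
have gY v : g v \in Y by rewrite mem_undup mem_cat orbC map_f ?mem_enum.
have sizeY : (size Y)%:R <= 2 * #|V|%:R :> R.
  rewrite -natrM ler_nat (leq_trans (size_undup _)) //.
  by rewrite size_cat !size_map -enumT -cardT addnn mul2n.
pose H y v : R := (y == f v)%:R - (y == g v)%:R.
pose D o y := \sum_b H y (Z b o).
have gap_as_sum : \sum_b (\sum_o W o * a o (f (Z b o)) - \sum_o W o * a o (g (Z b o)))
    = \sum_o W o * \sum_(y <- Y) a o y * D o y.
  transitivity (\sum_b \sum_o W o * \sum_(y <- Y) a o y * H y (Z b o)).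
    apply: eq_bigr => b _; rewrite -sumrB; apply: eq_bigr => o _; rewrite -mulrBr.
    by under eq_bigr do rewrite mulrBr; rewrite sumrB !sum_seq_indicator.
  rewrite exchange_big /=; apply: eq_bigr => o _; rewrite -mulr_sumr exchange_big /=.
  by congr (_ * _); apply: eq_bigr => y _; rewrite mulr_sumr.
have D_sqr y : \sum_o W o * D o y ^+ 2 = \sum_b \sum_o W o * H y (Z b o) ^+ 2.
  apply: sum_sqr_orthogonal => b b' bb'.
  rewrite (has_law_pair_sum (H y) (H y) (Z_indep bb')).
  suff -> : \sum_v nu v * H y v = 0 by rewrite mul0r.
  under eq_bigr do rewrite mulrBr ![(y == _)]eq_sym.
  by rewrite sumrB f_law g_law subrr.
have second_moment : \sum_o W o * \sum_(y <- Y) D o y ^+ 2 <= 2 * B%:R.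
  under eq_bigr do rewrite mulr_sumr.
  rewrite exchange_big /=; under eq_bigr do rewrite D_sqr.
  rewrite exchange_big /=.
  apply: (le_trans (y := \sum_(b < B) (2 : R))); last by rewrite sumr_const card_ord mulr_natr.
  apply: ler_sum => b _; rewrite exchange_big /=.
  apply: (le_trans (y := \sum_o W o * 2)); last by rewrite -mulr_suml W_sum1 mul1r.
  apply: ler_sum => o _.
  by rewrite -mulr_sumr; apply: ler_wpM2l; rewrite ?sum_sqr_indicator_sub_le.
have pointwise o : \sum_(y <- Y) a o y * D o y <= (\sum_(y <- Y) D o y ^+ 2) / 4 + (size Y)%:R.
  rewrite -sum1_size natr_sum mulr_suml -big_split /=; apply: ler_sum => y _.
  have /andP[a0 a1] := a01 o y; have := sqr_ge0 (D o y / 2 - a o y).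
  by rewrite mulr1n; nra.
rewrite gap_as_sum.
apply: (le_trans (y := \sum_o W o * ((\sum_(y <- Y) D o y ^+ 2) / 4 + (size Y)%:R))).
  by apply: ler_sum => o _; apply: ler_wpM2l.
under eq_bigr do rewrite mulrDr mulrA.
rewrite big_split /= -!mulr_suml W_sum1 mul1r.
lra.
Qed.

End Distinguisher.

Section Polynomials.
Variable R : realType.

Lemma abs_le_coeff_norm n (p : mlpoly R n) S : `|p S| <= coeff_norm p.
Proof.
rewrite /coeff_norm -sqrtr_sqr ler_sqrt ?sumr_ge0 // => [|S' _]; last exact: sqr_ge0.
rewrite (bigD1 S) //= lerDl; apply: sumr_ge0 => S' _; exact: sqr_ge0.
Qed.

Lemma coeff_norm_gt0 n (p : mlpoly R n) S : p S != 0 -> 0 < coeff_norm p.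
Proof. by move=> pS; apply: lt_le_trans (abs_le_coeff_norm p S); rewrite normr_gt0. Qed.

Lemma exists_coeff_neq0 n (p : mlpoly R n) : (0 < sparsity p)%N -> exists S, p S != 0.
Proof. by case/card_gt0P => S; rewrite inE; exists S. Qed.

Lemma far_from_sparse_of_coeffs n d T eps (p : mlpoly R n) :
  (T < sparsity p)%N -> (forall S, p S != 0 -> eps <= `|p S| / coeff_norm p) ->
  far_from_sparse d T eps p.
Proof.
move=> Tp p_coeffs; have [S0 pS0] := exists_coeff_neq0 (leq_ltn_trans (leq0n T) Tp).
have p_gt0 := coeff_norm_gt0 pS0.
split; first by apply: contra_neq pS0 => ->; rewrite ffunE.
move=> q _ qT; have [S] : exists2 S, p S != 0 & q S == 0.
  have : ~~ ([set S | p S != 0] \subset [set S | q S != 0]).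
    by apply: contraTN Tp => /subset_leq_card le_pq; rewrite -leqNgt (leq_trans le_pq).
  by case/subsetPn => S; rewrite !inE negbK; exists S.
move=> /p_coeffs le_eps /eqP qS; apply: (le_trans le_eps); rewrite ler_pM2r ?invr_gt0 //.
by have := abs_le_coeff_norm [ffun S => p S - q S] S; rewrite ffunE qS subr0.
Qed.

Definition scalep n (c : R) (p : mlpoly R n) : mlpoly R n := [ffun S => c * p S].

Lemma meval_scalep n c (p : mlpoly R n) x : meval (scalep c p) x = c * meval p x.
Proof. by rewrite /meval mulr_sumr; apply: eq_bigr => S _; rewrite ffunE mulrA. Qed.

Lemma sparsity_scalep n c (p : mlpoly R n) : c != 0 -> sparsity (scalep c p) = sparsity p.
Proof. by move=> c0; apply: eq_card => S; rewrite !inE ffunE mulf_eq0 negb_or c0. Qed.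

Lemma deg_le_scalep n d c (p : mlpoly R n) : deg_le d p -> deg_le d (scalep c p).
Proof. by move=> dp S dS; rewrite ffunE dp ?mulr0. Qed.

Lemma coeff_norm_scalep n c (p : mlpoly R n) : coeff_norm (scalep c p) = `|c| * coeff_norm p.
Proof.
rewrite /coeff_norm -sqrtr_sqr -sqrtrM ?sqr_ge0 // mulr_sumr.
by congr Num.sqrt; apply: eq_bigr => S _; rewrite ffunE exprMn.
Qed.

Lemma coeff_ratio_scalep n c (p : mlpoly R n) S : c != 0 ->
  `|scalep c p S| / coeff_norm (scalep c p) = `|p S| / coeff_norm p.
Proof.
move=> c0; rewrite ffunE normrM coeff_norm_scalep invfM mulrACA divff ?mul1r //.
by rewrite normr_eq0.
Qed.

Lemma sum_prodw_meval_sqr n (T : finType) (mu a : T -> R) (p : mlpoly R n) :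
  \sum_t mu t = 1 -> \sum_t mu t * a t = 0 -> \sum_t mu t * a t ^+ 2 = 1 ->
  \sum_(x : {ffun 'I_n -> T}) prodw mu x * meval p (fun i => a (x i)) ^+ 2 = \sum_S p S ^+ 2.
Proof.
move=> mu1 mean0 var1.
transitivity (\sum_S \sum_S' p S * p S' *
  \sum_(x : {ffun 'I_n -> T}) prodw mu x * (\prod_(i in S) a (x i) * \prod_(i in S') a (x i))).
  under eq_bigr do rewrite /meval expr2 big_distrlr mulr_sumr.
  rewrite exchange_big /=; apply: eq_bigr => S _.
  under eq_bigr do rewrite mulr_sumr.
  rewrite exchange_big /=; apply: eq_bigr => S' _.
  by rewrite mulr_sumr; apply: eq_bigr => x _; ring.
apply: eq_bigr => S _; under eq_bigr do rewrite sum_prodw_monomials //.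
rewrite (bigD1 S) //= eqxx mulr1 big1 ?addr0 ?expr2 // => S' /negbTE.
by rewrite eq_sym => ->; rewrite mulr0.
Qed.

(* [emb s p] is p(x_(s 0), ..., x_(s (n0-1))): the monomial of S0 becomes that of s @: S0. *)
Definition emb n0 n (s : 'I_n0 -> 'I_n) (p : mlpoly R n0) : mlpoly R n :=
  [ffun S => if [pick S0 : {set 'I_n0} | s @: S0 == S] is Some S0 then p S0 else 0].

Section Embedding.
Variables (n0 n : nat) (s : 'I_n0 -> 'I_n) (p : mlpoly R n0).
Hypothesis inj_s : injective s.

Lemma emb_imset (S0 : {set 'I_n0}) : emb s p (s @: S0) = p S0.
Proof.
rewrite ffunE; case: pickP => [S1 /eqP /(imset_inj inj_s) -> // | /(_ S0)].
by rewrite eqxx.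
Qed.

Lemma emb_neq0 (S : {set 'I_n}) : emb s p S != 0 -> exists2 S0, p S0 != 0 & S = s @: S0.
Proof. by rewrite ffunE; case: pickP => [S0 /eqP <- pS0 | _]; [exists S0 | rewrite eqxx]. Qed.

Lemma sum_emb (F : {set 'I_n} -> R -> R) : (forall S, F S 0 = 0) ->
  \sum_S F S (emb s p S) = \sum_(S0 : {set 'I_n0}) F (s @: S0) (p S0).
Proof.
move=> F0; rewrite (bigID (mem [set s @: S0 | S0 : {set 'I_n0}])) /=.
rewrite [X in _ + X]big1 ?addr0 => [|S notin_im]; last first.
  rewrite ffunE; case: pickP => [S0 /eqP eS | _]; last exact: F0.
  by rewrite -eS imset_f ?in_setT in notin_im.
rewrite big_imset /=; last by move=> S0 S1 _ _; apply: imset_inj.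
by apply: eq_big => [S0 | S0 _]; rewrite ?in_setT ?emb_imset.
Qed.

Lemma emb_meval (x : 'I_n -> R) : meval (emb s p) x = meval p (x \o s).
Proof.
rewrite /meval (sum_emb (F := fun S c => c * \prod_(i in S) x i)) => [|S]; last by rewrite mul0r.
by apply: eq_bigr => S0 _; rewrite big_imset // => i j _ _; apply: inj_s.
Qed.

Lemma coeff_norm_emb : coeff_norm (emb s p) = coeff_norm p.
Proof. by rewrite /coeff_norm (sum_emb (F := fun _ c => c ^+ 2)) // => S; rewrite expr0n. Qed.

Lemma sparsity_emb : sparsity (emb s p) = sparsity p.
Proof.
rewrite /sparsity -(card_imset _ (imset_inj inj_s)); apply: eq_card => S.
rewrite inE; apply/idP/imsetP => [/emb_neq0[S0 pS0 ->] | [S0 + ->]].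
  by exists S0; rewrite ?inE.
by rewrite inE emb_imset.
Qed.

Lemma deg_le_emb d : deg_le d p -> deg_le d (emb s p).
Proof.
move=> dp S dS; rewrite ffunE; case: pickP => // S0 /eqP eS.
by apply: dp; rewrite -eS card_imset in dS.
Qed.

Lemma far_from_sparse_emb d T eps :
  (T < sparsity p)%N -> (forall S0, p S0 != 0 -> eps <= `|p S0| / coeff_norm p) ->
  far_from_sparse d T eps (emb s p).
Proof.
move=> Tp p_coeffs; apply: far_from_sparse_of_coeffs; first by rewrite sparsity_emb.
move=> S /emb_neq0[S0 pS0 ->]; rewrite emb_imset coeff_norm_emb; exact: p_coeffs.
Qed.

End Embedding.

End Polynomials.

Section Sampling.
Variables (R : realType) (supp : seq R) (w : R -> R).
Hypotheses (w_ge0 : forall a, a \in supp -> 0 <= w a) (w_sum1 : \sum_(a <- supp) w a = 1).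
Hypotheses (mean0 : \sum_(a <- supp) w a * a = 0) (var1 : \sum_(a <- supp) w a * a ^+ 2 = 1).
Local Notation k := (size supp).

Let nu (c : 'I_k) : R := w (nth 0 supp c).

Lemma sum_nth_supp (G : R -> R) : \sum_(c < k) G (nth 0 supp c) = \sum_(a <- supp) G a.
Proof. by rewrite (big_nth 0) big_mkord. Qed.

Let sum_nu : \sum_c nu c = 1.
Proof. by rewrite -w_sum1 -(sum_nth_supp w). Qed.

Lemma pt_weight_ge0 n (x : {ffun 'I_n -> 'I_k}) : 0 <= pt_weight w x.
Proof. by apply: prodr_ge0 => i _; apply/w_ge0/mem_nth. Qed.

Lemma sum_pt_weight n : \sum_(x : {ffun 'I_n -> 'I_k}) pt_weight w x = 1.
Proof. exact: sum_prodw sum_nu. Qed.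

Lemma has_law_prob_val n (p : mlpoly R n) :
  has_law (@pt_weight R supp w n) (fun x => meval p (pt x)) (prob_val supp w p).
Proof.
by move=> y; rewrite /prob_val [RHS]big_mkcond; apply: eq_bigr => x _; rewrite mulr_natr mulrb.
Qed.

Lemma coeff_norm_ident_distr n (p q : mlpoly R n) :
  ident_distr supp w p q -> coeff_norm p = coeff_norm q.
Proof.
move=> id_pq.
have [mean0' var1'] : \sum_c nu c * nth 0 supp c = 0 /\ \sum_c nu c * nth 0 supp c ^+ 2 = 1.
  by rewrite (sum_nth_supp (fun a => w a * a)) (sum_nth_supp (fun a => w a * a ^+ 2)).
rewrite /coeff_norm -(sum_prodw_meval_sqr p sum_nu mean0' var1').
rewrite -(sum_prodw_meval_sqr q sum_nu mean0' var1').
pose vals (r : mlpoly R n) :=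
  map (fun x : {ffun 'I_n -> 'I_k} => meval r (pt x)) (enum {ffun 'I_n -> 'I_k}).
pose Y := undup (vals p ++ vals q).
have uY : uniq Y := undup_uniq _.
have pY (x : {ffun 'I_n -> 'I_k}) : meval p (pt x) \in Y.
  by rewrite mem_undup mem_cat; apply/orP; left; apply: map_f; rewrite mem_enum.
have qY (x : {ffun 'I_n -> 'I_k}) : meval q (pt x) \in Y.
  by rewrite mem_undup mem_cat; apply/orP; right; apply: map_f; rewrite mem_enum.
rewrite (has_law_sum_seq (fun v => v ^+ 2) (has_law_prob_val p) uY pY).
rewrite (has_law_sum_seq (fun v => v ^+ 2) (has_law_prob_val q) uY qY).
by congr Num.sqrt; apply: eq_bigr => y _; rewrite id_pq.
Qed.

Lemma prob_val_scalep n c (p : mlpoly R n) y : c != 0 ->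
  prob_val supp w (scalep c p) y = prob_val supp w p (c^-1 * y).
Proof.
move=> c0; apply: eq_bigl => x; rewrite meval_scalep.
by apply/eqP/eqP => [<- | ->]; rewrite ?mulKf ?mulVKf.
Qed.

Lemma ident_distr_scalep n c (p q : mlpoly R n) : c != 0 ->
  ident_distr supp w p q -> ident_distr supp w (scalep c p) (scalep c q).
Proof. by move=> c0 id_pq y; rewrite !prob_val_scalep. Qed.

Definition restr_samples m n0 n (s : 'I_n0 -> 'I_n) (xs : {ffun 'I_m -> {ffun 'I_n -> 'I_k}}) :
  {ffun 'I_m -> {ffun 'I_n0 -> 'I_k}} := [ffun j => restr s (xs j)].

Definition sample_labels m n (p : mlpoly R n) (xs : {ffun 'I_m -> {ffun 'I_n -> 'I_k}}) :
  {ffun 'I_m -> R} := [ffun j => meval p (pt (xs j))].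

Definition tester_accept n m (A : tester R n m) (xs : {ffun 'I_m -> {ffun 'I_n -> 'I_k}})
  (y : {ffun 'I_m -> R}) : R := A (fun j => (pt (xs j), y j + 0)).

Lemma accept_prob_emb n0 n m (A : tester R n m) (s : 'I_n0 -> 'I_n) (p : mlpoly R n0) :
  injective s ->
  accept_prob supp w A (emb s p) = \sum_xs prodw (@pt_weight R supp w n) xs *
    tester_accept A xs (sample_labels p (restr_samples s xs)).
Proof.
move=> inj_s; apply: eq_bigr => xs _; congr (_ * A _); apply: funext => j.
rewrite !ffunE emb_meval //; congr (_, meval p _ + 0).
by apply: funext => i0; rewrite /pt ffunE.
Qed.

Lemma emb_blocks_accept_gap_le n0 n m B (A : tester R n m) (P Q : mlpoly R n0)
    (e : 'I_B * 'I_n0 -> 'I_n) :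
  injective e -> ident_distr supp w P Q -> (forall smp, 0 <= A smp <= 1) ->
  \sum_(b < B) (accept_prob supp w A (emb (fun i0 => e (b, i0)) P)
                - accept_prob supp w A (emb (fun i0 => e (b, i0)) Q))
    <= B%:R / 2 + 2 * ((k ^ n0) ^ m)%:R.
Proof.
move=> inj_e id_PQ A01.
have inj_blk b : injective (fun i0 => e (b, i0)) by move=> i0 j0 /inj_e [].
under eq_bigr do rewrite !accept_prob_emb //.
have -> : ((k ^ n0) ^ m)%N = #|{ffun 'I_m -> {ffun 'I_n0 -> 'I_k}}|.
  by rewrite !card_ffun !card_ord.
refine (indep_blocks_gap_le (Z := fun b => restr_samples (fun i0 => e (b, i0)))
  (f := sample_labels P) (g := sample_labels Q) (a := tester_accept A)
  (W := prodw (@pt_weight R supp w n)) (nu := prodw (@pt_weight R supp w n0))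
  (lam := prodw (prob_val supp w P)) _ _ _ _ _ _).
- by move=> xs; apply: prodr_ge0 => j _; exact: pt_weight_ge0.
- exact: sum_prodw (sum_pt_weight n).
- move=> b b' bb'.
  apply: (has_law_map2 (f := restr (fun i0 => e (b, i0))) (g := restr (fun i0 => e (b', i0)))).
  apply: (has_law_restr2 (mu := nu) sum_nu) => // i0 j0.
  by apply: contra_neq bb' => /inj_e [].
- exact: has_law_map (has_law_prob_val P).
- apply: (has_law_map (f := fun x => meval Q (pt x))) => y.
  by rewrite (has_law_prob_val Q) id_PQ.
- by move=> xs y; exact: A01.
Qed.

Section Tester.
Variables (d s T : nat) (K eps : R) (n m : nat) (A : tester R n m).
Hypotheses (solA : solves_testing supp w d s T K eps A) (K_ge1 : 1 <= K).

Let in_norm_range (p : mlpoly R n) : coeff_norm p = 1 -> K^-1 <= coeff_norm p <= K.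
Proof. by move=> ->; rewrite invf_le1 ?K_ge1 // (lt_le_trans ltr01 K_ge1). Qed.

Lemma accept_prob_emb_sparse n0 (t : 'I_n0 -> 'I_n) (p : mlpoly R n0) :
  injective t -> deg_le d p -> coeff_norm p = 1 -> (sparsity p <= s)%N ->
  9 / 10 <= accept_prob supp w A (emb t p).
Proof.
move=> inj_t dp np sp; rewrite -(coeff_norm_emb p inj_t) in np.
have [accept _] := solA.2 _ (deg_le_emb inj_t dp) (in_norm_range np).
by apply: accept; rewrite sparsity_emb.
Qed.

Lemma accept_prob_emb_far n0 (t : 'I_n0 -> 'I_n) (q : mlpoly R n0) :
  injective t -> deg_le d q -> coeff_norm q = 1 -> (T < sparsity q)%N ->
  (forall S, q S != 0 -> eps <= `|q S| / coeff_norm q) ->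
  accept_prob supp w A (emb t q) <= 1 / 10.
Proof.
move=> inj_t dq nq Tq q_coeffs; rewrite -(coeff_norm_emb q inj_t) in nq.
have [_ reject] := solA.2 _ (deg_le_emb inj_t dq) (in_norm_range nq).
by have := reject (far_from_sparse_emb inj_t d Tq q_coeffs); lra.
Qed.

Lemma tester_blocks_le n0 B (P Q : mlpoly R n0) (e : 'I_B * 'I_n0 -> 'I_n) :
  injective e -> deg_le d P -> deg_le d Q -> (sparsity P <= s)%N -> (T < sparsity Q)%N ->
  (forall S, Q S != 0 -> eps <= `|Q S| / coeff_norm Q) -> ident_distr supp w P Q ->
  (3 * B <= 20 * (k ^ n0) ^ m)%N.
Proof.
move=> inj_e dP dQ sP TQ Q_coeffs id_PQ.
have [S0 QS0] := exists_coeff_neq0 (leq_ltn_trans (leq0n T) TQ).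
have Q_gt0 := coeff_norm_gt0 QS0.
pose c := (coeff_norm Q)^-1.
have c_neq0 : c != 0 by rewrite invr_eq0 gt_eqF.
have norm1 (p : mlpoly R n0) : coeff_norm p = coeff_norm Q -> coeff_norm (scalep c p) = 1.
  by move=> np; rewrite coeff_norm_scalep np ger0_norm ?invr_ge0 ?ltW // mulVf ?gt_eqF.
have cQ_coeffs S : scalep c Q S != 0 -> eps <= `|scalep c Q S| / coeff_norm (scalep c Q).
  by rewrite coeff_ratio_scalep // ffunE mulf_eq0 negb_or => /andP[_ /Q_coeffs].
have inj_blk b : injective (fun i0 => e (b, i0)) by move=> i0 j0 /inj_e [].
have gap b : 8 / 10 <= accept_prob supp w A (emb (fun i0 => e (b, i0)) (scalep c P))
                      - accept_prob supp w A (emb (fun i0 => e (b, i0)) (scalep c Q)).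
  have := accept_prob_emb_sparse (inj_blk b) (deg_le_scalep c dP)
    (norm1 P (coeff_norm_ident_distr id_PQ)) (leq_trans (eq_leq (sparsity_scalep P c_neq0)) sP).
  have := accept_prob_emb_far (inj_blk b) (deg_le_scalep c dQ) (norm1 Q erefl)
    (leq_trans TQ (eq_leq (esym (sparsity_scalep Q c_neq0)))) cQ_coeffs.
  lra.
have := emb_blocks_accept_gap_le inj_e (ident_distr_scalep c_neq0 id_PQ) solA.1.
move/(le_trans (ler_sum _ (fun b _ => gap b))).
by rewrite sumr_const card_ord -mulr_natr -(ler_nat R) !natrM; lra.
Qed.

End Tester.

End Sampling.

Lemma exists_inj_ord (T : finType) n : (#|T| <= n)%N -> exists f : T -> 'I_n, injective f.
Proof.
move=> le_Tn; exists (fun x => widen_ord le_Tn (enum_rank x)).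
by move=> x y /(congr1 val) /= /val_inj; apply: enum_rank_inj.
Qed.

Lemma le_sqr_expn_of_blocks n n0 m E : (0 < E)%N ->
  (3 * (n %/ n0.+1) <= 20 * E ^ m)%N -> ((8 * n0.+1) ^ 2 <= n)%N -> (n <= (E ^ m) ^ 2)%N.
Proof.
move=> E_gt0 le_B le_n; have := ltn_ceil n (ltn0Sn n0).
have : (0 < E ^ m)%N by rewrite expn_gt0 E_gt0.
move: (n %/ n0.+1)%N (E ^ m)%N le_B => B X le_B X_gt0 lt_n.
have lt_nX : (n < 8 * n0.+1 * X)%N by nia.
nia.
Qed.

Lemma ln_le_of_le_sqr_expn (R : realType) n m E : (0 < n)%N -> (0 < E)%N ->
  (n <= (E ^ m) ^ 2)%N -> (2 * E%:R)^-1 * ln (n%:R : R) <= m%:R.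
Proof.
move=> n_gt0 E_gt0 le_n; have E_pos : 0 < E%:R :> R by rewrite ltr0n.
rewrite ler_pdivrMl ?mulr_gt0 //.
have : ln (n%:R : R) <= ln E%:R * (m * 2)%:R.
  rewrite mulr_natr -lnXn // ler_ln ?posrE ?ltr0n ?exprn_gt0 //.
  by rewrite -natrX ler_nat expnM.
rewrite natrM; have := ln_sublinear E_pos; have : 0 <= m%:R :> R := ler0n _ _.
nra.
Qed.

Theorem theorem1p7 (R : realType) (supp : seq R) (w : R -> R) (d s T : nat) :
  uniq supp ->
  (forall a, a \in supp -> 0 < w a) ->
  \sum_(a <- supp) w a = 1 ->
  \sum_(a <- supp) w a * a = 0 ->
  \sum_(a <- supp) w a * a ^+ 2 = 1 ->
  (exists t : nat, is_max_sparsity_gap supp w d s t /\ (T <= t - 1)%N /\ (0 < t)%N) ->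
  exists eps : R, 0 < eps /\
  exists c : R, 0 < c /\
  exists N : nat,
  forall n : nat, (N <= n)%N ->
  forall K : R, 1 <= K ->
  forall (m : nat) (A : tester R n m),
    solves_testing supp w d s T K eps A ->
    c * ln (n%:R) <= m%:R.
Proof.
(* Points of X^{(x) n} are indexed by positions in [supp]. *)
move=> _ w_gt0 w_sum1 mean0 var1 [t [[[n0 [P [Q [dP [dQ [sP [sQ id_PQ]]]]]]] _] [le_T t_gt0]]].
have w_ge0 a : a \in supp -> 0 <= w a by move/w_gt0/ltW.
have supp_gt0 : (0 < size supp)%N.
  move: w_sum1; rewrite lt0n size_eq0; apply: contra_eqN => /eqP ->.
  by rewrite big_nil eq_sym oner_eq0.
have [S0 QS0] : exists S, Q S != 0 by apply: exists_coeff_neq0; rewrite sQ.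
case: (arg_minP (P := [pred S | Q S != 0]) (fun S => `|Q S|) QS0) => S1 QS1 min_S1.
have Q_gt0 := coeff_norm_gt0 QS0.
exists (`|Q S1| / coeff_norm Q); split; first by rewrite divr_gt0 ?normr_gt0.
have E_gt0 : (0 < size supp ^ n0)%N by rewrite expn_gt0 supp_gt0.
exists (2 * (size supp ^ n0)%:R)^-1; split; first by rewrite invr_gt0 mulr_gt0 ?ltr0n.
exists ((8 * n0.+1) ^ 2)%N => n le_n K K_ge1 m A solA.
have [e inj_e] : exists e : 'I_(n %/ n0.+1) * 'I_n0 -> 'I_n, injective e.
  apply: exists_inj_ord; rewrite card_prod !card_ord (leq_trans _ (leq_trunc_div n n0.+1)) //.
  by rewrite leq_mul2l leqnSn orbT.
have Q_coeffs S : Q S != 0 -> `|Q S1| / coeff_norm Q <= `|Q S| / coeff_norm Q.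
  by move=> QS; rewrite ler_pM2r ?invr_gt0 // min_S1.
have T_lt_Q : (T < sparsity Q)%N by rewrite sQ; lia.
have := tester_blocks_le w_ge0 w_sum1 mean0 var1 solA K_ge1 inj_e dP dQ (eq_leq sP) T_lt_Q
  Q_coeffs id_PQ.
move/(le_sqr_expn_of_blocks E_gt0)/(_ le_n).
by apply: ln_le_of_le_sqr_expn; rewrite // (leq_trans _ le_n) // expn_gt0.
Qed.
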